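(* Let $G$ be a graph and let $\mathcal{P} = \{V_1,\dots,V_k\}$ be a partition of $V(G)$ such that $|V_i| > 2\Delta(G)$ for all $i \in [k-1]$. Then for any $v_k, v_k' \in V_k$ there exists an independent transversal $T$ of $\{V_1,\dots,V_{k-1}\}$ such that both $T \cup \{v_k\}$ and $T\cup\{v_k'\}$ are independent transversals of $\mathcal{P}$.
   Context: Given a graph $G$ and a collection $\mathcal{Q}=\{W_1,\dots,W_m\}$ of pairwise disjoint subsets of $V(G)$: a transversal of $\mathcal{Q}$ is a set $S \subseteq \bigcup_i W_i$ with $|S \cap W_i| = 1$ for every $i\in[m]$; an independent transversal of $\mathcal{Q}$ is a transversal of $\mathcal{Q}$ that is an independent set in $G$. $\Delta(G)$ is the maximum degree of $G$. *)

(* A simple graph G is a symmetric irreflexive relation e on a finType T. *)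
From mathcomp Require Import all_boot.
Set Implicit Arguments. Unset Strict Implicit. Unset Printing Implicit Defensive.

Definition maxdeg (T : finType) (e : rel T) : nat :=
  \max_(x : T) #|[set y | e x y]|.

Definition independent (T : finType) (e : rel T) (S : {set T}) : Prop :=
  forall x y, x \in S -> y \in S -> ~~ e x y.

Definition transversal (T : finType) (I : finType) (W : I -> {set T}) (S : {set T}) : Prop :=
  S \subset \bigcup_(i : I) W i /\ forall i : I, #|S :&: W i| = 1.

Definition indep_transversal (T : finType) (e : rel T) (I : finType)
  (W : I -> {set T}) (S : {set T}) : Prop :=
  transversal W S /\ independent e S.

From mathcomp Require Import all_boot zify.
From Stdlib Require Import Classical.

Set Implicit Arguments. Unset Strict Implicit. Unset Printing Implicit Defensive.

(* Delete the neighbourhoods of v and v', at most 2 Delta vertices in all, from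
   V_1, ..., V_{k-1}.  The truncated parts W_i still satisfy Haxell's condition
   |U_{i in J} W_i| > 2 Delta (|J| - 1) for every nonempty J, so they have an
   independent transversal, and it has no neighbour of v or v'.

   Haxell's theorem is proved by adding the parts one at a time.  To extend a
   partial independent transversal to a new part W_n, grow a sequence of
   stages: at each stage pick, among all transversals compatible with the
   earlier stages and all vertices y of W_n or of a part already hit by a
   stage that are not dominated by earlier stages, a pair minimising the number
   m of neighbours of y in the transversal.  The counting condition guarantees
   such y exists.  If m = 0 and y is in W_n we are done; if m = 0 and y is in
   an earlier part, exchanging y for that part's vertex contradicts the
   minimality of that earlier stage; if m > 0 the part of a neighbour x of y
   is new, giving the next stage.  There are at most #|J| stages. *)

Lemma ex_minimal_nat (P : nat -> Prop) :
  (exists n, P n) -> exists2 n, P n & forall m, P m -> n <= m.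
Proof.
case=> n; elim/ltn_ind: n => n IH Pn.
have [[m ltmn Pm] | no_smaller] := classic (exists2 m, m < n & P m); first exact: IH m ltmn Pm.
exists n => // m Pm; rewrite leqNgt; apply/negP => ltmn; by apply: no_smaller; exists m.
Qed.

Lemma leq_card_bigcup_seq (T : finType) (A : Type) (F : A -> {set T}) (r : seq A) d :
  (forall a, #|F a| <= d) -> #|\bigcup_(a <- r) F a| <= size r * d.
Proof.
move=> le_d; elim: r => [|a r IH]; first by rewrite big_nil cards0.
rewrite big_cons mulSn; apply: leq_trans (leq_card_setU _ _) _.
exact: leq_add.
Qed.

Lemma card_bigcup_disjoint (T I : finType) (F : I -> {set T}) (J : {pred I}) :
  (forall i j, i != j -> [disjoint F i & F j]) ->
  #|\bigcup_(i in J) F i| = \sum_(i in J) #|F i|.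
Proof.
move=> F_disj; rewrite -!big_enum; elim: (enum J) (enum_uniq J) => [|i r IH] /=.
  by rewrite !big_nil cards0.
case/andP=> i_r r_uniq; rewrite !big_cons -IH //.
apply/eqP; rewrite (leq_card_setU _ _).2 bigcup_seq.
apply: bigcup_disjoint => j j_r; apply: F_disj.
by apply: contraNneq i_r => ->.
Qed.

Lemma setU1I_in (T : finType) (u : T) (S X : {set T}) :
  u \in X -> [disjoint S & X] -> (u |: S) :&: X = [set u].
Proof.
move=> uX SX; apply/setP=> z; rewrite !inE.
case: (z =P u) => [-> | _]; first by rewrite uX.
by case zX: (z \in X); rewrite ?andbF //= (disjointFl SX zX).
Qed.

Lemma setU1I_notin (T : finType) (u : T) (S X : {set T}) :
  u \notin X -> (u |: S) :&: X = S :&: X.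
Proof.
move=> uX; apply/setP=> z; rewrite !inE.
by case: (z =P u) => [-> | _] //=; rewrite (negbTE uX) !andbF.
Qed.

Lemma independent_setU1 (T : finType) (e : rel T) (u : T) (S : {set T}) :
  symmetric e -> irreflexive e -> independent e S -> [disjoint [set y | e u y] & S] ->
  independent e (u |: S).
Proof.
move=> e_sym e_irr S_indep u_isolated.
have u_nadj z : z \in S -> ~~ e u z.
  by move=> zS; have := disjointFl u_isolated zS; rewrite inE => ->.
move=> a b; rewrite !inE => /predU1P[-> | aS] /predU1P[-> | bS].
- by rewrite e_irr.
- exact: u_nadj.
- by rewrite e_sym u_nadj.
- exact: S_indep.
Qed.

Section Haxell.
Variables (T : finType) (e : rel T) (I : finType) (W : I -> {set T}) (D : nat).
Hypotheses (e_sym : symmetric e) (e_irr : irreflexive e).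
Hypothesis card_nbhd_le : forall x, #|[set y | e x y]| <= D.
Hypothesis W_disj : forall i j, i != j -> [disjoint W i & W j].
Hypothesis W_large : forall J : {set I}, J != set0 ->
  2 * D * (#|J| - 1) < #|\bigcup_(i in J) W i|.

Local Notation nbhd x := [set y | e x y].

Lemma W_inj i j x : x \in W i -> x \in W j -> i = j.
Proof.
move=> xi xj; apply/eqP; apply: contraLR xi => /W_disj ij.
by rewrite (disjointFl ij xj).
Qed.

Definition indep_transversal_on (J : {set I}) (M : {set T}) :=
  [/\ M \subset \bigcup_(i in J) W i, independent e M &
      forall i, i \in J -> #|M :&: W i| = 1].

Lemma indep_transversal_on0 : indep_transversal_on set0 set0.
Proof. by split=> [|x y|i]; rewrite ?sub0set ?inE. Qed.

Lemma indep_transversal_on_eq J M i x y : indep_transversal_on J M -> i \in J ->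
  x \in M :&: W i -> y \in M :&: W i -> x = y.
Proof.
case=> _ _ one_per_part iJ xMi yMi.
have /card_le1_eqP le1 : #|M :&: W i| <= 1 by rewrite one_per_part.
exact: le1.
Qed.

Lemma indep_transversal_on_exchange J M p y :
  indep_transversal_on J M -> y \in W p -> [disjoint nbhd y & M] ->
  indep_transversal_on (p |: J) (y |: (M :\: W p)).
Proof.
case=> M_sub M_indep one_per_part yp y_isolated; split.
- apply/subsetP=> z; rewrite !inE => /predU1P[-> | /andP[_ zM]].
    by apply/bigcupP; exists p; rewrite ?setU11.
  have /bigcupP[i iJ zi] := subsetP M_sub z zM.
  by apply/bigcupP; exists i; rewrite // inE iJ orbT.
- apply: independent_setU1 => //; first by move=> a b /setDP[aM _] /setDP[bM _]; exact: M_indep.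
  by apply: disjointWr y_isolated; exact: subsetDl.
- move=> i; rewrite !inE; have [-> _ | ip /= iJ] := eqVneq i p.
    rewrite setU1I_in ?cards1 //.
    by rewrite disjoint_subset; apply/subsetP=> z /setDP[_]; rewrite inE.
  rewrite setU1I_notin; last by apply: contra ip => yi; rewrite (W_inj yi yp).
  rewrite -(one_per_part i iJ); apply: eq_card => z; rewrite !inE.
  case zi: (z \in W i); rewrite ?andbF // !andbT.
  suff -> : z \notin W p by [].
  by apply: contraNN ip => zp; rewrite (W_inj zi zp).
Qed.

Section Extension.
Variables (n : I) (J : {set I}).
Hypothesis nJ : n \notin J.

(* A stage (x, y, m, p): the chosen free vertex y, the minimum m of its
   number of neighbours over all candidates, and a neighbour x of y in the
   minimising transversal, lying in the part W p. *)
Definition stage := (T * T * nat * I)%type.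
Definition sx (c : stage) : T := c.1.1.1.
Definition sy (c : stage) : T := c.1.1.2.
Definition sm (c : stage) : nat := c.1.2.
Definition sp (c : stage) : I := c.2.

Definition reach (s : seq stage) : {set T} :=
  \bigcup_(i in n |: [set i in map sp s]) W i.

Definition dominated (s : seq stage) : {set T} :=
  \bigcup_(c <- s) (nbhd (sx c) :|: nbhd (sy c)).

Definition fits (s : seq stage) (M : {set T}) :=
  forall c, c \in s -> sx c \in M /\ #|nbhd (sy c) :&: M| = sm c.

Definition candidate (s : seq stage) (M : {set T}) (y : T) :=
  [/\ indep_transversal_on J M, fits s M, y \in reach s & y \notin dominated s].

Record stage_ok (s : seq stage) (c : stage) : Prop := StageOk {
  stage_reach : sy c \in reach s;
  stage_free : sy c \notin dominated s;
  stage_edge : e (sy c) (sx c);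
  stage_part : sx c \in W (sp c);
  stage_partJ : sp c \in J;
  stage_part_new : sp c \notin map sp s;
  stage_min : forall M y, candidate s M y -> sm c <= #|nbhd y :&: M| }.

Definition valid (s : seq stage) :=
  forall pre c post, s = pre ++ c :: post -> stage_ok pre c.

Lemma valid_nil : valid [::].
Proof. by case. Qed.

Lemma valid_rcons s c : valid s -> stage_ok s c -> valid (rcons s c).
Proof.
move=> vs ok pre c' post; case/lastP: post => [|post z].
  by rewrite cats1 => /rcons_inj[<- <-].
by rewrite -rcons_cons -rcons_cat => /rcons_inj[/vs].
Qed.

Lemma valid_rconsE s c : valid (rcons s c) -> valid s /\ stage_ok s c.
Proof.
move=> vs; split; last by apply: (vs s c [::]); rewrite cats1.
by move=> pre c' post def_s; apply: (vs pre c' (rcons post c)); rewrite def_s rcons_cat.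
Qed.

Lemma valid_nth s c0 l : valid s -> l < size s -> stage_ok (take l s) (nth c0 s l).
Proof.
by move=> vs lt_l; apply: (vs _ _ (drop l.+1 s)); rewrite -{1}(cat_take_drop l s) (drop_nth c0).
Qed.

Lemma valid_mem s c : valid s -> c \in s -> stage_ok (take (index c s) s) c.
Proof. by move=> vs cs; rewrite -{2}(nth_index c cs); apply/valid_nth; rewrite ?index_mem. Qed.

Lemma valid_parts s : valid s -> uniq (map sp s) /\ {subset map sp s <= J}.
Proof.
elim/last_ind: s => [|s c IH vs]; first by [].
case/valid_rconsE: vs => /IH[uniq_s sub_s] [_ _ _ _ cJ c_new _].
rewrite map_rcons rcons_uniq c_new uniq_s; split=> // p.
by rewrite mem_rcons inE => /predU1P[-> | /sub_s].
Qed.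

Lemma valid_size s : valid s -> size s <= #|J|.
Proof.
case/valid_parts=> uniq_s sub_s; rewrite -(size_map sp) -(card_uniqP uniq_s).
by apply/subset_leq_card/subsetP.
Qed.

Lemma mem_dominated s c y : c \in s -> y \in nbhd (sx c) :|: nbhd (sy c) -> y \in dominated s.
Proof.
rewrite /dominated; elim: s => [//|c' s IH]; rewrite inE big_cons.
case/predU1P=> [-> y_nb | /IH y_dom /y_dom]; first by rewrite inE y_nb.
by rewrite inE => ->; rewrite orbT.
Qed.

Lemma exists_free s : valid s -> exists2 y, y \in reach s & y \notin dominated s.
Proof.
move=> vs; have [uniq_s sub_s] := valid_parts vs.
have card_dom : #|dominated s| <= size s * (2 * D).
  apply: leq_card_bigcup_seq => c; apply: leq_trans (leq_card_setU _ _) _.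
  by rewrite mul2n -addnn leq_add.
have n_new : n \notin [set i in map sp s].
  by rewrite inE; apply: contra nJ => /sub_s.
have card_parts : #|n |: [set i in map sp s]| = (size s).+1.
  by rewrite cardsU1 n_new cardsE (card_uniqP uniq_s) size_map.
have parts_neq0 : n |: [set i in map sp s] != set0 by apply/set0Pn; exists n; rewrite setU11.
have := W_large parts_neq0; rewrite card_parts subn1 /= => card_reach.
have /subsetPn[y y_reach y_free] : ~~ (reach s \subset dominated s).
  apply: contraL card_reach => /subset_leq_card le_reach; rewrite -leqNgt.
  by apply: leq_trans le_reach _; rewrite mulnC.
by exists y.
Qed.

(* The minimality recorded at each stage propagates: a transversal that keeps
   the first l vertices x and does not increase any recorded count must keep
   the count of stage l. *)
Lemma valid_count_ge s M c0 l : valid s -> indep_transversal_on J M ->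
  (forall c, c \in s -> #|nbhd (sy c) :&: M| <= sm c) ->
  l < size s -> (forall i, i < l -> sx (nth c0 s i) \in M) ->
  sm (nth c0 s l) <= #|nbhd (sy (nth c0 s l)) :&: M|.
Proof.
move=> vs itM count_le; elim/ltn_ind: l => l IH lt_l x_in.
have ok := valid_nth c0 vs lt_l.
apply: (stage_min ok); split; [done | | exact: stage_reach ok | exact: stage_free ok].
move=> c /(nthP c0)[i]; rewrite size_take lt_l => lt_il <-.
have lt_is : i < size s := ltn_trans lt_il lt_l.
rewrite nth_take //; split; first exact: x_in.
apply/eqP; rewrite eqn_leq count_le ?mem_nth //=.
by apply: IH => // j lt_ji; apply/x_in/(ltn_trans lt_ji).
Qed.

Lemma isolated_candidate_new_part s M y : valid s -> candidate s M y ->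
  [disjoint nbhd y & M] -> y \in W n.
Proof.
move=> vs [itM fitM y_reach y_free] y_isolated.
move: y_reach => /bigcupP[p]; rewrite !inE => /predU1P[-> // | /mapP[c cs ->] y_part].
pose l := index c s; have lt_l : l < size s by rewrite index_mem.
have ok := valid_mem vs cs.
pose M' := y |: (M :\: W (sp c)).
have itM' : indep_transversal_on J M'.
  have := indep_transversal_on_exchange itM y_part y_isolated.
  by rewrite (setUidPr _) // sub1set; exact: stage_partJ ok.
have count_sub c' : c' \in s -> nbhd (sy c') :&: M' \subset nbhd (sy c') :&: M.
  move=> c's; apply/subsetP=> z; rewrite !inE => /andP[e_z /predU1P[def_z | /andP[_ ->]]].
    by move: y_free; rewrite -def_z (mem_dominated c's) // !inE e_z orbT.
  by rewrite e_z.
have count_le c' : c' \in s -> #|nbhd (sy c') :&: M'| <= sm c'.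
  by move=> c's; have [_ <-] := fitM c' c's; exact/subset_leq_card/count_sub.
have x_in i : i < l -> sx (nth c s i) \in M'.
  move=> lt_il; have lt_is := ltn_trans lt_il lt_l.
  rewrite !inE (fitM _ (mem_nth c lt_is)).1 andbT; apply/orP; right.
  apply: contra (stage_part_new ok) => xi_part; apply/mapP; exists (nth c s i).
    by rewrite -(nth_take c lt_il) mem_nth // size_take lt_l.
  exact: W_inj xi_part (stage_part (valid_nth c vs lt_is)).
have := valid_count_ge vs itM' count_le lt_l x_in; rewrite nth_index // leqNgt.
case/negP; have [xc_in <-] := fitM c cs.
apply/proper_card/properP; split; first exact: count_sub.
exists (sx c); first by rewrite !inE (stage_edge ok) xc_in.
rewrite !inE (stage_edge ok) (stage_part ok) /= orbF.
apply: contraNneq y_free => <-; apply: (mem_dominated cs).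
by rewrite !inE (stage_edge ok) orbT.
Qed.

Lemma minimal_candidate_stage s M y : valid s -> candidate s M y ->
  (forall M' y', candidate s M' y' -> #|nbhd y :&: M| <= #|nbhd y' :&: M'|) ->
  0 < #|nbhd y :&: M| ->
  exists c, valid (rcons s c) /\ fits (rcons s c) M.
Proof.
move=> vs [itM fitM y_reach y_free] y_min /card_gt0P[x]; rewrite !inE => /andP[e_yx xM].
have [M_sub _ _] := itM.
have /bigcupP[p pJ xp] := subsetP M_sub x xM.
exists (x, y, #|nbhd y :&: M|, p); split.
  apply: valid_rcons => //; split=> //.
  apply/mapP=> -[c cs def_p].
  have [xc_in _] := fitM c cs.
  have xc_part : sx c \in W p by move: (stage_part (valid_mem vs cs)); rewrite -def_p.
  have def_x : x = sx c by apply: (indep_transversal_on_eq itM pJ); rewrite inE ?xM ?xp ?xc_in.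
  by move: y_free; rewrite (mem_dominated cs) // !inE -def_x e_sym e_yx.
by move=> c; rewrite mem_rcons inE => /predU1P[-> // | /fitM].
Qed.

Lemma extension_step s M : valid s -> indep_transversal_on J M -> fits s M ->
  (exists S, indep_transversal_on (n |: J) S) \/
  exists c M', [/\ valid (rcons s c), indep_transversal_on J M' & fits (rcons s c) M'].
Proof.
move=> vs itM fitM; have [y0 y0_reach y0_free] := exists_free vs.
pose attained m := exists M' y', candidate s M' y' /\ #|nbhd y' :&: M'| = m.
have [m [M1 [y1 [cand1 def_m]]] m_min] : exists2 m, attained m & forall m', attained m' -> m <= m'.
  by apply: ex_minimal_nat; exists #|nbhd y0 :&: M|, M, y0.
have y1_min M' y' : candidate s M' y' -> #|nbhd y1 :&: M1| <= #|nbhd y' :&: M'|.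
  by move=> cand'; rewrite def_m; apply: m_min; exists M', y'.
have [itM1 _ _ _] := cand1.
have [m0 | m_pos] := posnP m.
  have y1_isolated : [disjoint nbhd y1 & M1] by rewrite -setI_eq0 -cards_eq0 def_m m0.
  have y1_new := isolated_candidate_new_part vs cand1 y1_isolated.
  by left; exists (y1 |: (M1 :\: W n)); exact: indep_transversal_on_exchange.
have [|c [vs' fit']] := minimal_candidate_stage vs cand1 y1_min; first by rewrite def_m.
by right; exists c, M1.
Qed.

Lemma extension M : indep_transversal_on J M -> exists S, indep_transversal_on (n |: J) S.
Proof.
suff ext_from k s M' : #|J| - size s <= k -> valid s -> indep_transversal_on J M' ->
    fits s M' -> exists S, indep_transversal_on (n |: J) S.
  by move=> itM; apply: (ext_from #|J| [::] M (leq_subr _ _) valid_nil itM) => c; rewrite in_nil.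
elim: k s M' => [|k IH] s M' le_k vs itM' fitM';
  case: (extension_step vs itM' fitM') => [// | [c [M'' [vs' itM'' fitM'']]]];
  have := valid_size vs'; rewrite size_rcons => lt_s.
- by lia.
- by apply: (IH (rcons s c) M'') => //; rewrite size_rcons; lia.
Qed.

End Extension.

Lemma exists_indep_transversal_on J : exists M, indep_transversal_on J M.
Proof.
move: {2}#|J| (leqnn #|J|) => k; elim: k J => [|k IH] J le_J;
  have [-> | [n nJ]] := set_0Vmem J; try by exists set0; exact: indep_transversal_on0.
  by move: le_J; rewrite leqn0 cards_eq0 => /eqP J0; rewrite J0 inE in nJ.
have [M itM] : exists M, indep_transversal_on (J :\ n) M.
  by apply: IH; move: le_J; rewrite (cardsD1 n J) nJ.
by rewrite -(setD1K nJ); apply: extension itM; rewrite setD11.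
Qed.

Theorem haxell_indep_transversal : exists S, indep_transversal e W S.
Proof.
have [S [S_sub S_indep one_per_part]] := exists_indep_transversal_on [set: I].
exists S; split=> //; split=> [|i]; last by apply: one_per_part; rewrite inE.
by apply: (subset_trans S_sub); apply/subsetP=> x /bigcupP[i _ xi]; apply/bigcupP; exists i.
Qed.

End Haxell.

Lemma card_nbhd_le_maxdeg (T : finType) (e : rel T) x : #|[set y | e x y]| <= maxdeg e.
Proof. exact: (@leq_bigmax _ (fun x => #|[set y | e x y]|) x). Qed.

Lemma card_bigcup_setD_gt (T I : finType) (V : I -> {set T}) (B : {set T}) d :
  (forall i j, i != j -> [disjoint V i & V j]) -> (forall i, d < #|V i|) -> #|B| <= d ->
  forall J : {set I}, J != set0 -> d * (#|J| - 1) < #|\bigcup_(i in J) (V i :\: B)|.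
Proof.
move=> V_disj V_large card_B J J0.
have sub : (\bigcup_(i in J) V i) :\: B \subset \bigcup_(i in J) (V i :\: B).
  apply/subsetP=> x /setDP[/bigcupP[i iJ xi] xB].
  by apply/bigcupP; exists i; rewrite // inE xB.
have sum_ge : #|J| * d.+1 <= \sum_(i in J) #|V i|.
  by rewrite -sum_nat_const; apply: leq_sum => i _; apply: V_large.
have card_BI : #|(\bigcup_(i in J) V i) :&: B| <= #|B| by apply/subset_leq_card/subsetIr.
have := subset_leq_card sub; rewrite cardsD card_bigcup_disjoint //.
have : 0 < #|J| by rewrite card_gt0.
nia.
Qed.

Lemma indep_transversal_setD (T I : finType) (e : rel T) (V : I -> {set T}) (B S : {set T}) :
  indep_transversal e (fun i => V i :\: B) S -> indep_transversal e V S /\ [disjoint B & S].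
Proof.
case=> [[S_sub one_per_part] S_indep].
have S_notB z : z \in S -> z \notin B.
  by move=> /(subsetP S_sub)/bigcupP[i _ /setDP[]].
split; last by rewrite disjoint_sym disjoint_subset; apply/subsetP=> z /S_notB; rewrite inE.
split=> //; split=> [|i].
  by apply/subsetP=> z /(subsetP S_sub)/bigcupP[i _ /setDP[zi _]]; apply/bigcupP; exists i.
rewrite -(one_per_part i); apply: eq_card => z; rewrite !inE.
by case zS: (z \in S); rewrite //= (S_notB z zS).
Qed.

Lemma indep_transversal_add_last (T : finType) (e : rel T) k (V : 'I_k.+1 -> {set T}) S u :
  symmetric e -> irreflexive e -> (forall i j, i != j -> [disjoint V i & V j]) ->
  indep_transversal e (fun i : 'I_k => V (widen_ord (leqnSn k) i)) S ->
  u \in V ord_max -> [disjoint [set y | e u y] & S] -> indep_transversal e V (u |: S).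
Proof.
move=> e_sym e_irr V_disj [[S_sub one_per_part] S_indep] u_last u_isolated.
have S_not_last : [disjoint S & V ord_max].
  rewrite disjoint_sym; apply: disjointWr S_sub _; apply: bigcup_disjoint => j _.
  by apply: V_disj; rewrite -val_eqE /= neq_ltn ltn_ord orbT.
split; last exact: independent_setU1.
split=> [|i].
  apply/subsetP=> z; rewrite !inE => /predU1P[-> | /(subsetP S_sub)/bigcupP[j _ zj]].
    by apply/bigcupP; exists ord_max.
  by apply/bigcupP; exists (widen_ord (leqnSn k) j).
have [-> | i_ne] := eqVneq i ord_max; first by rewrite setU1I_in ?cards1.
have lt_ik : i < k.
  rewrite ltn_neqAle -ltnS ltn_ord andbT; apply: contra i_ne => /eqP i_k.
  by apply/eqP; apply: val_inj.
rewrite setU1I_notin; last by rewrite (disjointFr (V_disj ord_max i _) u_last) // eq_sym.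
have -> : i = widen_ord (leqnSn k) (Ordinal lt_ik) by apply: val_inj.
exact: one_per_part.
Qed.

Theorem lemma2p1 (T : finType) (e : rel T) (k : nat) (V : 'I_k.+1 -> {set T})
  (e_sym : symmetric e) (e_irr : irreflexive e)
  (V_disj : forall i j : 'I_k.+1, i != j -> [disjoint V i & V j])
  (V_cover : forall x : T, exists i : 'I_k.+1, x \in V i)
  (V_big : forall i : 'I_k.+1, i != ord_max -> 2 * maxdeg e < #|V i|)
  (v v' : T) (hv : v \in V ord_max) (hv' : v' \in V ord_max) :
  exists S : {set T},
    [/\ indep_transversal e (fun i : 'I_k => V (widen_ord (leqnSn k) i)) S,
        indep_transversal e V (v |: S)
      & indep_transversal e V (v' |: S)].
Proof.
pose w := widen_ord (leqnSn k); set B := [set y | e v y] :|: [set y | e v' y].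
have card_B : #|B| <= 2 * maxdeg e.
  rewrite mul2n -addnn; apply: leq_trans (leq_card_setU _ _) _.
  exact: leq_add (card_nbhd_le_maxdeg e v) (card_nbhd_le_maxdeg e v').
have Vw_disj i j : i != j -> [disjoint V (w i) & V (w j)].
  by move=> ij; apply: V_disj; rewrite -val_eqE /= val_eqE.
have Vw_big i : 2 * maxdeg e < #|V (w i)|.
  by apply: V_big; rewrite -val_eqE /= neq_ltn ltn_ord.
have W_disj i j : i != j -> [disjoint V (w i) :\: B & V (w j) :\: B].
  by move=> ij; apply: disjointW (Vw_disj i j ij); exact: subsetDl.
have [S S_it] := haxell_indep_transversal e_sym e_irr (card_nbhd_le_maxdeg e) W_disj
  (card_bigcup_setD_gt Vw_disj Vw_big card_B).
have [S_it_w B_S] := indep_transversal_setD S_it.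
exists S; split=> //; apply: indep_transversal_add_last => //.
- exact: disjointWl (subsetUl _ _) B_S.
- exact: disjointWl (subsetUr _ _) B_S.
Qed.
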